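(* For each fixed positive integer $K$, with $\theta=(K,P)$, $$\frac{C_{\rm K}(\theta)}{p(\theta)}\sim 1+\frac{P}{K^3}\qquad (P\to\infty).$$
   Context: For positive integers $K\le P$, $\theta=(K,P)$: $q(\theta)=\binom{P-K}{K}/\binom{P}{K}$ if $2K\le P$ and $0$ otherwise; $p(\theta)=1-q(\theta)$; $r(\theta)=\binom{P-2K}{K}/\binom{P}{K}$ if $3K\le P$ and $0$ otherwise; $\beta(\theta)=(1-q)^3+q^3-qr$; $C_{\rm K}(\theta)=\beta(\theta)/(1-q(\theta))^2$ is the clustering coefficient $\mathbb{P}[E_{12}\mid E_{13}\cap E_{23}]$ of the random key graph (nodes receive i.i.d. uniform $K$-subsets of $\{1,\dots,P\}$, adjacent iff subsets intersect). Note $p(\theta)$ equals the clustering coefficient $C_{\rm ER}(p(\theta))$ of the Erdős–Rényi graph with edge probability $p(\theta)$. *)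

From Stdlib Require Import Reals Lra Lia Arith.
Open Scope R_scope.

(* theta = (K,P); binomial coefficients are the real-valued Binomial.C *)
Definition qK (K P : nat) : R :=
  if (2 * K <=? P)%nat then C (P - K) K / C P K else 0.
Definition pK (K P : nat) : R := 1 - qK K P.
Definition rK (K P : nat) : R :=
  if (3 * K <=? P)%nat then C (P - 2 * K) K / C P K else 0.
Definition betaK (K P : nat) : R :=
  (1 - qK K P) ^ 3 + qK K P ^ 3 - qK K P * rK K P.
Definition CK (K P : nat) : R := betaK K P / (1 - qK K P) ^ 2.

(* With x = P and q = A/Q, r = B/Q, where A, B, Q are the falling factorials of length K
   starting at x - K, x - 2K and x, one has C/p = beta/(1-q)^3 = 1 + A (A^2 - BQ)/(Q - A)^3.
   Expanding the falling factorials in powers of x gives A ~ x^K, Q - A ~ K^2 x^(K-1) and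
   A^2 - BQ ~ K^3 x^(2K-2), so the excess A (A^2 - BQ)/(Q - A)^3 is asymptotic to x/K^3. *)

From Stdlib Require Import Reals Arith Lra Lia.
From Coquelicot Require Import Coquelicot.
Open Scope R_scope.

Fixpoint falling (y : R) (n : nat) : R :=
  match n with O => 1 | S n => falling y n * (y - INR n) end.

Lemma C_falling m n : (n <= m)%nat -> Binomial.C m n = falling (INR m) n / INR (fact n).
Proof.
  induction n as [|n IH]; intros Hnm.
  - unfold Binomial.C; rewrite Nat.sub_0_r; simpl. field. apply INR_fact_neq_0.
  - rewrite pascal_step3, IH by lia. simpl falling.
    rewrite minus_INR by lia.
    change (fact (S n)) with (S n * fact n)%nat. rewrite mult_INR, S_INR.
    pose proof (pos_INR n). field. split; [apply INR_fact_neq_0 | lra].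
Qed.

Lemma falling_pos y n : INR n < y + 1 -> 0 < falling y n.
Proof.
  induction n as [|n IH]; intros Hn; simpl; [lra|].
  rewrite S_INR in Hn. pose proof (pos_INR n).
  apply Rmult_lt_0_compat; [apply IH|]; lra.
Qed.

Lemma falling_lt y z n : (0 < n)%nat -> INR n < y + 1 -> y < z -> falling y n < falling z n.
Proof.
  induction n as [|n IH]; intros Hn Hny Hyz; [lia|].
  destruct n as [|n]; [simpl; lra|].
  rewrite S_INR in Hny.
  assert (Hy : 0 < falling y (S n)) by (apply falling_pos; lra).
  assert (Hyz' : falling y (S n) < falling z (S n)) by (apply IH; [lia | lra | lra]).
  change (falling y (S n) * (y - INR (S n)) < falling z (S n) * (z - INR (S n))).
  nra.
Qed.

Lemma qK_falling K P : (2 * K <= P)%nat ->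
  qK K P = falling (INR P - INR K) K / falling (INR P) K.
Proof.
  intros HP. unfold qK.
  replace (2 * K <=? P)%nat with true by (symmetry; apply Nat.leb_le; lia).
  rewrite !C_falling, minus_INR by lia.
  assert (0 < falling (INR P) K).
  { apply falling_pos. apply le_INR in HP. rewrite mult_INR in HP. simpl in HP.
    pose proof (pos_INR K). lra. }
  field. split; first [apply INR_fact_neq_0 | lra].
Qed.

Lemma rK_falling K P : (3 * K <= P)%nat ->
  rK K P = falling (INR P - 2 * INR K) K / falling (INR P) K.
Proof.
  intros HP. unfold rK.
  replace (3 * K <=? P)%nat with true by (symmetry; apply Nat.leb_le; lia).
  rewrite !C_falling, minus_INR, mult_INR by lia.
  assert (0 < falling (INR P) K).
  { apply falling_pos. apply le_INR in HP. rewrite mult_INR in HP. simpl in HP.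
    pose proof (pos_INR K). lra. }
  change (INR 2) with 2. field. split; first [apply INR_fact_neq_0 | lra].
Qed.

Lemma CK_div_pK K P : qK K P <> 1 ->
  CK K P / pK K P = 1 + qK K P * (qK K P ^ 2 - rK K P) / (1 - qK K P) ^ 3.
Proof.
  intros Hq. unfold CK, pK, betaK. field. lra.
Qed.

Definition shift_ratio (c : R) (n : nat) (y : R) : R := falling (y - c) n / y ^ n.

Definition gap_ratio (k : R) (n : nat) (y : R) : R :=
  y * (falling y n - falling (y - k) n) / y ^ n.

Definition defect_ratio (k : R) (n : nat) (y : R) : R :=
  y ^ 2 * (falling (y - k) n ^ 2 - falling (y - 2 * k) n * falling y n) / (y ^ n) ^ 2.

Lemma CK_div_pK_ratios K P : (1 <= K)%nat -> (3 * K <= P)%nat ->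
  CK K P / pK K P = 1 + INR P * (shift_ratio (INR K) K (INR P) * defect_ratio (INR K) K (INR P)
                                 / gap_ratio (INR K) K (INR P) ^ 3).
Proof.
  intros HK HP.
  assert (Hk : 1 <= INR K) by (apply (le_INR 1); lia).
  assert (HkP : 3 * INR K <= INR P)
    by (apply le_INR in HP; rewrite mult_INR in HP; simpl in HP; lra).
  assert (HA : 0 < falling (INR P - INR K) K) by (apply falling_pos; lra).
  assert (HAQ : falling (INR P - INR K) K < falling (INR P) K) by (apply falling_lt; lia || lra).
  assert (HX : 0 < INR P ^ K) by (apply pow_lt; lra).
  assert (Hq : qK K P <> 1).
  { rewrite qK_falling by lia. intros Heq. field_simplify_eq in Heq; lra. }
  rewrite CK_div_pK, qK_falling, rK_falling by (assumption || lia).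
  unfold shift_ratio, gap_ratio, defect_ratio.
  field. lra.
Qed.

Lemma is_lim_seq_pow u (l : R) n : is_lim_seq u l -> is_lim_seq (fun N => u N ^ n) (l ^ n).
Proof.
  intros Hu. induction n as [|n IH]; simpl.
  - apply is_lim_seq_const.
  - exact (is_lim_seq_mult' _ _ _ _ Hu IH).
Qed.

Section FallingAsymptotics.

Variable x : nat -> R.
Hypothesis x_pos : forall N, 0 < x N.
Hypothesis x_to_infty : is_lim_seq x p_infty.

Lemma is_lim_seq_inv_x : is_lim_seq (fun N => / x N) 0.
Proof. exact (is_lim_seq_inv _ _ x_to_infty ltac:(discriminate)). Qed.

Lemma is_lim_seq_one_sub_div_x c : is_lim_seq (fun N => 1 - c / x N) 1.
Proof.
  pose proof (is_lim_seq_minus' _ _ _ _ (is_lim_seq_const 1)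
    (is_lim_seq_mult' _ _ _ _ (is_lim_seq_const c) is_lim_seq_inv_x)) as Hlim.
  rewrite Rmult_0_r, Rminus_0_r in Hlim. exact Hlim.
Qed.

Lemma is_lim_seq_shift_ratio c n : is_lim_seq (fun N => shift_ratio c n (x N)) 1.
Proof.
  induction n as [|n IH].
  - eapply is_lim_seq_ext; [|apply is_lim_seq_const].
    intros N; unfold shift_ratio; simpl; field.
  - apply is_lim_seq_ext with
      (u := fun N => shift_ratio c n (x N) * (1 - (c + INR n) / x N)).
    { intros N. pose proof (x_pos N). pose proof (pow_lt _ n (x_pos N)).
      unfold shift_ratio; simpl. field. lra. }
    pose proof (is_lim_seq_mult' _ _ _ _ IH (is_lim_seq_one_sub_div_x (c + INR n))) as Hlim.
    rewrite Rmult_1_r in Hlim. exact Hlim.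
Qed.

Lemma is_lim_seq_gap_ratio k n : is_lim_seq (fun N => gap_ratio k n (x N)) (INR n * k).
Proof.
  induction n as [|n IH].
  - eapply is_lim_seq_ext; [|apply is_lim_seq_const].
    intros N; unfold gap_ratio; simpl; field.
  - apply is_lim_seq_ext with
      (u := fun N => gap_ratio k n (x N) * (1 - INR n / x N) + k * shift_ratio k n (x N)).
    { intros N. pose proof (x_pos N). pose proof (pow_lt _ n (x_pos N)).
      unfold gap_ratio, shift_ratio; simpl. field. lra. }
    replace (INR (S n) * k) with (INR n * k * 1 + k * 1) by (rewrite S_INR; ring).
    apply is_lim_seq_plus'.
    + exact (is_lim_seq_mult' _ _ _ _ IH (is_lim_seq_one_sub_div_x _)).
    + exact (is_lim_seq_mult' _ _ _ _ (is_lim_seq_const k) (is_lim_seq_shift_ratio k n)).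
Qed.

Lemma is_lim_seq_defect_ratio k n : is_lim_seq (fun N => defect_ratio k n (x N)) (INR n * k ^ 2).
Proof.
  induction n as [|n IH].
  - eapply is_lim_seq_ext; [|apply is_lim_seq_const].
    intros N; unfold defect_ratio; simpl; field.
  - (* (x - k - n)^2 - (x - 2k - n)(x - n) = k^2 *)
    apply is_lim_seq_ext with
      (u := fun N => defect_ratio k n (x N) * ((1 - (2 * k + INR n) / x N) * (1 - INR n / x N))
                     + k ^ 2 * shift_ratio k n (x N) ^ 2).
    { intros N. pose proof (x_pos N). pose proof (pow_lt _ n (x_pos N)).
      unfold defect_ratio, shift_ratio; simpl. field. lra. }
    replace (INR (S n) * k ^ 2) with (INR n * k ^ 2 * (1 * 1) + k ^ 2 * 1 ^ 2)
      by (rewrite S_INR; ring).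
    apply is_lim_seq_plus'.
    + apply (is_lim_seq_mult' _ _ _ _ IH).
      apply is_lim_seq_mult'; apply is_lim_seq_one_sub_div_x.
    + apply (is_lim_seq_mult' _ _ _ _ (is_lim_seq_const _)).
      apply is_lim_seq_pow, is_lim_seq_shift_ratio.
Qed.

Lemma is_lim_seq_one_add_ratio T t : 0 < t -> is_lim_seq T t ->
  is_lim_seq (fun N => (1 + x N * T N) / (1 + x N * t)) 1.
Proof.
  intros Ht HT.
  apply is_lim_seq_ext with (u := fun N => (/ x N + T N) / (/ x N + t)).
  { intros N. pose proof (x_pos N).
    assert (0 < / x N) by (apply Rinv_0_lt_compat; lra).
    assert (0 < x N * t) by (apply Rmult_lt_0_compat; lra).
    field. lra. }
  pose proof (is_lim_seq_div' _ _ _ _ (is_lim_seq_plus' _ _ _ _ is_lim_seq_inv_x HT)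
    (is_lim_seq_plus' _ _ _ _ is_lim_seq_inv_x (is_lim_seq_const t)) ltac:(lra)) as Hlim.
  replace ((0 + t) / (0 + t)) with 1 in Hlim by (field; lra). exact Hlim.
Qed.

End FallingAsymptotics.

Theorem corollary2 (K : nat) (hK : (1 <= K)%nat) :
  Un_cv (fun P : nat => (CK K P / pK K P) / (1 + INR P / INR K ^ 3)) 1.
Proof.
  set (k := INR K).
  assert (hk : 0 < k) by (apply lt_0_INR; lia).
  set (x := fun N => INR (N + 3 * K)).
  assert (x_pos : forall N, 0 < x N) by (intros N; apply lt_0_INR; lia).
  assert (x_to_infty : is_lim_seq x p_infty)
    by exact (proj1 (is_lim_seq_incr_n _ (3 * K) _) is_lim_seq_INR).
  apply is_lim_seq_Reals, (is_lim_seq_incr_n _ (3 * K)).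
  apply is_lim_seq_ext with (u := fun N => (1 + x N *
      (shift_ratio k K (x N) * defect_ratio k K (x N) / gap_ratio k K (x N) ^ 3))
      / (1 + x N * / k ^ 3)).
  { intros N. rewrite CK_div_pK_ratios by lia. reflexivity. }
  apply is_lim_seq_one_add_ratio; [exact x_pos | exact x_to_infty | |].
  { apply Rinv_0_lt_compat, pow_lt, hk. }
  replace (/ k ^ 3) with (1 * (k * k ^ 2) / (k * k) ^ 3) by (field; lra).
  apply is_lim_seq_div'.
  - apply is_lim_seq_mult'; [apply is_lim_seq_shift_ratio | apply is_lim_seq_defect_ratio]; assumption.
  - apply is_lim_seq_pow, is_lim_seq_gap_ratio; assumption.
  - apply pow_nonzero. nra.
Qed.
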